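(* For positive integers $n$ and $t$, the complete multipartite graph $K_{n\times t}$ (with $n$ parts each of size $t$) is integrable.
   Context: For a graph $G$ with adjacency matrix $A(G)$ and smallest eigenvalue $\theta_{\min}(G)$, $G$ is integrable if there is an integral matrix $N$ with $A(G)-\lfloor\theta_{\min}(G)\rfloor I=N^TN$. For $n\geq 2$, $K_{n\times t}$ is strongly regular with parameters $(nt,(n-1)t,(n-2)t,(n-1)t)$ and smallest eigenvalue $-t$. *)

From HB Require Import structures.
From mathcomp Require Import all_boot all_order all_algebra all_field.
Set Implicit Arguments. Unset Strict Implicit. Unset Printing Implicit Defensive.
Import Order.TTheory GRing.Theory Num.Theory.
Local Open Scope ring_scope.

Definition adjacency_mx (v : nat) (e : rel 'I_v) : 'M[int]_v :=
  \matrix_(i, j) ((e i j : nat)%:Z).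

Definition is_min_eigenvalue (v : nat) (A : 'M[int]_v) (theta : algC) : Prop :=
  eigenvalue (map_mx intr A) theta /\
  (forall mu : algC, eigenvalue (map_mx intr A) mu -> theta <= mu).

Definition integrable (v : nat) (e : rel 'I_v) : Prop :=
  exists theta : algC, is_min_eigenvalue (adjacency_mx e) theta /\
  exists (m : nat) (N : 'M[int]_(m, v)),
    adjacency_mx e - (Num.floor theta)%:M = N^T *m N.

(* Complete multipartite graph K_{n x t}: vertex k in 'I_(n*t) lies in part
   k %/ t; two vertices are adjacent iff they lie in different parts. *)
Definition K_multipartite (n t : nat) : rel 'I_(n * t) :=
  fun i j => (i %/ t)%N != (j %/ t)%N.
Arguments K_multipartite : clear implicits.

From mathcomp Require Import all_boot all_order all_algebra all_field.
From mathcomp Require Import zify.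
Set Implicit Arguments. Unset Strict Implicit. Unset Printing Implicit Defensive.
Import Order.TTheory GRing.Theory Num.Theory.

(* The complement of K_{n x t} is n disjoint copies of K_t, whose Laplacian is
   L = tI - (block diagonal all-ones), so A(K_{n x t}) + tI = J + L.  Both J and
   L are Gram matrices of integral matrices: J of the all-ones row, L of the
   oriented incidence matrix.  A matrix A with A - cI positive semidefinite has
   no eigenvalue below c, and for n >= 2 the difference of the indicator
   vectors of two parts is an eigenvector for -t, so theta_min = -t is an
   integer and A - floor(theta_min) I = N^T N.  For n = 1 the graph is
   edgeless, theta_min = 0 and N is the empty matrix. *)

Lemma big_ord_mul_blocks (R : Type) (idx : R) (op : Monoid.law idx) n t
    (F : nat -> R) :
  \big[op/idx]_(k < n * t) F k =
  \big[op/idx]_(q < n) \big[op/idx]_(r < t) F (q * t + r).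
Proof.
elim: n => [|n IHn]; first by rewrite mul0n !big_ord0.
by rewrite mulSnr big_split_ord IHn big_ord_recr.
Qed.

Lemma sum_divn_eq n t p : p < n -> \sum_(k < n * t) (k %/ t == p) = t.
Proof.
move=> ltpn; rewrite (big_ord_mul_blocks _ _ _ (fun k => (k %/ t == p) : nat)).
have blockE (q : 'I_n) (r : 'I_t) : (q * t + r) %/ t = q.
  have t_gt0 : 0 < t := leq_ltn_trans (leq0n r) (ltn_ord r).
  by rewrite divnMDl // divn_small ?addn0.
under eq_bigr => q _ do under eq_bigr => r _ do rewrite blockE.
rewrite (bigD1 (Ordinal ltpn)) //= [X in _ + X]big1 => [|q qp]; last first.
  by rewrite big1 // => r _; rewrite -val_eqE /= in qp; rewrite (negbTE qp).
by rewrite eqxx sum_nat_const card_ord muln1 addn0.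
Qed.

Local Open Scope ring_scope.
Local Open Scope sesquilinear_scope.

Lemma eigenvalue_ge_gram (C : numClosedFieldType) n m (A : 'M[C]_n)
    (N : 'M[C]_(m, n)) c mu :
  A - c%:M = N^t* *m N -> eigenvalue A mu -> c <= mu.
Proof.
move=> AcE /eigenvalueP[x xAE x_neq0].
have quadE : x *m (A - c%:M) *m x^t* = (mu - c) *: (x *m x^t*).
  by rewrite mulmxBr xAE mul_mx_scalar -scalerBl -scalemxAl.
have normE : x *m (A - c%:M) *m x^t* = (x *m N^t*) *m (x *m N^t*)^t*.
  by rewrite AcE !mulmxA -map_trmx trmx_mul map_mxM map_trmx trmxCK mulmxA.
have x_pos : 0 < dotmx x x by rewrite (dnorm_gt0 (@dotmx _ n)).
have : 0 <= dotmx (x *m N^t*) (x *m N^t*) := dnorm_ge0 _ _.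
by rewrite !dotmxE -normE quadE mxE -dotmxE pmulr_lge0 ?subr_ge0.
Qed.

Lemma is_min_eigenvalue_gram v (A : 'M[int]_v) (c : int) m (N : 'M[int]_(m, v)) :
  A - c%:M = N^T *m N -> eigenvalue (map_mx intr A) (c%:~R : algC) ->
  is_min_eigenvalue A c%:~R.
Proof.
move=> AcE c_eig; split=> // mu; apply: (eigenvalue_ge_gram (N := map_mx intr N)).
have conjN : (map_mx intr N)^t* = (map_mx intr N)^T :> 'M[algC]_(v, m).
  by apply/matrixP => i j; rewrite !mxE conj_intr ?intr_int.
by rewrite conjN map_trmx -map_mxM -AcE map_mxB /= map_scalar_mx.
Qed.

Lemma integrable_gram v (e : rel 'I_v) (c : int) m (N : 'M[int]_(m, v)) :
  adjacency_mx e - c%:M = N^T *m N ->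
  eigenvalue (map_mx intr (adjacency_mx e)) (c%:~R : algC) -> integrable e.
Proof.
move=> AcE c_eig; exists c%:~R; split; first exact: is_min_eigenvalue_gram AcE c_eig.
by exists m, N; rewrite intrKfloor.
Qed.

Lemma integrable_edgeless v (e : rel 'I_v) :
  (0 < v)%N -> (forall i j, ~~ e i j) -> integrable e.
Proof.
move=> v_gt0 e0.
have A0 : adjacency_mx e = 0 by apply/matrixP => i j; rewrite !mxE (negbTE (e0 i j)).
apply: (@integrable_gram _ _ 0 _ (0 : 'M_(0, v))).
  by rewrite A0 raddf0 subr0 trmx0 mul0mx.
apply/eigenvalueP; exists (const_mx 1); first by rewrite A0 map_mx0 mulmx0 scale0r.
by apply/negP => /eqP/rowP/(_ (Ordinal v_gt0)); rewrite !mxE; apply/eqP; exact: oner_neq0.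
Qed.

Section Laplacian.
Variables (R : pzRingType) (v : nat) (e : rel 'I_v).

(* The row of the ordered pair (i, j) is e_i - e_j when ij is an edge with
   i < j, and zero otherwise. *)
Definition incidence_mx : 'M[R]_(#|{: 'I_v * 'I_v}|, v) :=
  \matrix_(r, k) let: (i, j) := enum_val r in
    (e i j && (i < j)%N)%:R * ((i == k)%:R - (j == k)%:R).

Definition laplacian_mx : 'M[R]_v :=
  \matrix_(i, j) (((i == j) * \sum_k e i k)%:R - (e i j)%:R).

Lemma incidence_entry_mul (s x y z w : bool) :
  s%:R * (x%:R - y%:R) * (s%:R * (z%:R - w%:R)) =
  (s && (x && z) + s && (y && w))%:R - (s && (x && w) + s && (y && z))%:R :> R.
Proof.
by case: s x y z w => [] [] [] [] [];
  rewrite /= ?(natrD, mulr1n, mulr0n, mul1r, mul0r, mulr1, mulr0, subr0, sub0r, subrr,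
               addr0, add0r, mulrN, mulNr, opprK, oppr0).
Qed.

Lemma sum_edges_at a (F : rel 'I_v) :
  (\sum_i \sum_j (e i j && ((i == a) && F i j)) = \sum_j (e a j && F a j))%N.
Proof.
rewrite (bigD1 a) //= [X in (_ + X)%N]big1 ?addn0 => [|i ia].
  by apply: eq_bigr => j _; rewrite eqxx.
by rewrite big1 // => j _; rewrite (negbTE ia) andbF.
Qed.

Hypotheses (e_sym : symmetric e) (e_irr : irreflexive e).

Lemma sum_edges_oriented (F : rel 'I_v) :
  (\sum_i \sum_j ((e i j && (i < j)%N && F i j) + (e i j && (i < j)%N && F j i))
   = \sum_i \sum_j (e i j && F i j))%N.
Proof.
under eq_bigr do rewrite big_split /=.
rewrite big_split /= [X in (_ + X)%N]exchange_big -big_split /=.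
apply: eq_bigr => i _; rewrite -big_split /=; apply: eq_bigr => j _.
rewrite e_sym; case: (ltngtP i j) => [||/val_inj ->];
  by rewrite ?andbT ?andbF ?addn0 ?e_irr.
Qed.

Lemma gram_incidence_mx : incidence_mx^T *m incidence_mx = laplacian_mx.
Proof.
apply/matrixP => a b.
have -> : (incidence_mx^T *m incidence_mx) a b =
    \sum_i \sum_j incidence_mx (enum_rank (i, j)) a * incidence_mx (enum_rank (i, j)) b.
  rewrite mxE pair_bigA (reindex enum_rank) /=; last first.
    by apply: onW_bij; apply: enum_rank_bij.
  by apply: eq_bigr => -[i j] _; rewrite mxE.
under eq_bigr do under eq_bigr do rewrite !mxE enum_rankK incidence_entry_mul.
under eq_bigr do rewrite sumrB -!natr_sum.
rewrite sumrB -!natr_sum.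
rewrite (sum_edges_oriented (fun i j => (i == a) && (i == b))).
rewrite (sum_edges_oriented (fun i j => (i == a) && (j == b))).
rewrite !sum_edges_at mxE.
have -> : (\sum_j (e a j && (j == b)))%N = e a b.
  by rewrite (bigD1 b) //= eqxx andbT big1 ?addn0 // => j /negbTE ->; rewrite andbF.
case: eqVneq => [<-|_]; rewrite ?mul1n ?mul0n; under eq_bigr do rewrite ?andbT ?andbF.
  by [].
by rewrite big1.
Qed.

End Laplacian.

Arguments incidence_mx {R v} e.
Arguments laplacian_mx {R v} e.

Section CompleteMultipartite.
Variables n t : nat.
Local Notation A := (adjacency_mx (K_multipartite n t)).

Definition same_part : rel 'I_(n * t) := fun i j => (i != j) && (i %/ t == j %/ t)%N.

Lemma same_part_sym : symmetric same_part.
Proof. by move=> i j; rewrite /same_part eq_sym [(i %/ t == _)%N]eq_sym. Qed.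

Lemma same_part_irr : irreflexive same_part.
Proof. by move=> i; rewrite /same_part eqxx. Qed.

Hypothesis t_gt0 : (0 < t)%N.

Lemma ltn_part (i : 'I_(n * t)) : (i %/ t < n)%N.
Proof. by rewrite ltn_divLR. Qed.

Lemma sum_same_part i : (\sum_k same_part i k)%N = t.-1.
Proof.
have := sum_divn_eq t (ltn_part i); rewrite (bigD1 i) //= eqxx add1n => partE.
apply: succn_inj; rewrite prednK // -[in RHS]partE; congr _.+1.
rewrite [RHS]big_mkcond; apply: eq_bigr => k _.
by rewrite /same_part [i == k]eq_sym [(i %/ t == _)%N]eq_sym; case: (k != i).
Qed.

Definition multipartite_factor : 'M[int]_(1 + #|{: 'I_(n * t) * 'I_(n * t)}|, n * t) :=
  col_mx (const_mx 1) (incidence_mx same_part).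

Lemma adjacency_multipartite_gram :
  A - (- t%:Z)%:M = multipartite_factor^T *m multipartite_factor.
Proof.
rewrite tr_col_mx mul_row_col (gram_incidence_mx _ same_part_sym same_part_irr).
apply/matrixP => i j; rewrite !mxE big_ord1 !mxE sum_same_part mulr1 /K_multipartite.
case: (eqVneq i j) => [<-|ij]; first by rewrite same_part_irr eqxx /=; lia.
by rewrite /same_part ij /=; case: eqP => _ /=; lia.
Qed.

Definition part_row (R : pzSemiRingType) (p : nat) : 'rV[R]_(n * t) :=
  \row_k (k %/ t == p)%N%:R.

Lemma part_row_mul_adjacency (R : pzRingType) p : (p < n)%N ->
  part_row R p *m map_mx intr A = t%:R *: (const_mx 1 - part_row R p).
Proof.
move=> ltpn; apply/rowP => j; rewrite !mxE.
transitivity ((\sum_(k < n * t) (k %/ t == p))%N%:R * (p != j %/ t)%N%:R : R).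
  rewrite natr_sum mulr_suml; apply: eq_bigr => k _; rewrite !mxE /K_multipartite.
  by case: eqVneq => [->|_]; rewrite ?mul0r // mulrz_nat.
by rewrite sum_divn_eq // eq_sym; case: eqP => _; rewrite ?subrr ?subr0 ?mulr1 ?mulr0.
Qed.

Lemma eigenvalue_multipartite (F : fieldType) : (1 < n)%N ->
  eigenvalue (map_mx intr A) (- t%:R : F).
Proof.
move=> n_gt1; apply/eigenvalueP; exists (part_row F 0 - part_row F 1).
  rewrite mulmxBl !part_row_mul_adjacency ?(ltnW n_gt1) // -scalerBr scaleNr -scalerN.
  by congr (_ *: _); rewrite opprB addrC subrKA opprB.
have vertex0 : (0 < n * t)%N by rewrite muln_gt0 t_gt0 (ltnW n_gt1).
apply/negP => /eqP/rowP/(_ (Ordinal vertex0)); rewrite !mxE div0n /= subr0.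
by apply/eqP; exact: oner_neq0.
Qed.

End CompleteMultipartite.

Lemma K_multipartite1_nonadjacent t (i j : 'I_(1 * t)) : ~~ K_multipartite 1 t i j.
Proof.
have lt_t (k : 'I_(1 * t)) : (k < t)%N := leq_trans (ltn_ord k) (eq_leq (mul1n t)).
by rewrite /K_multipartite !divn_small ?negbK.
Qed.

Theorem mainTheorem4 (n t : nat) (hn : (0 < n)%N) (ht : (0 < t)%N) :
  integrable (K_multipartite n t).
Proof.
have [n_gt1 | n_le1] := ltnP 1 n.
  apply: integrable_gram (@adjacency_multipartite_gram n t ht) _.
  by rewrite intrN -pmulrn; exact: eigenvalue_multipartite.
have -> : n = 1%N by apply/anti_leq/andP.
by apply: integrable_edgeless; [rewrite mul1n | exact: K_multipartite1_nonadjacent].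
Qed.
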